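(* Let $m,n,a$ be nonnegative integers with $1\le m\le n+1$ and $n\le a$. Then $$\sum_{k=0}^{m-1}\binom{m}{k}^{-1}\binom{a}{n-k}^{-1}=g(m)\sum_{i=0}^{m-1}\frac{C(i)}{g(i)\,(i+2)\,(a+i-n+2)},$$ where $$g(m)=\frac{(a+m-n+1)!\,(a+4)!\,(m+1)}{2\,(a+m+3)!\,(a-n+2)!}$$ (and $g(i)$ is the same expression with $m$ replaced by $i$), and $$C(i)=(n+i+in+1)\binom{a}{n}^{-1}+(2i+a-n+3)\binom{a}{n-i}^{-1}.$$ *)

From mathcomp Require Import all_boot all_algebra.
Set Implicit Arguments. Unset Strict Implicit. Unset Printing Implicit Defensive.
Import GRing.Theory Num.Theory.
Local Open Scope ring_scope.

(* Working over the rationals. All subtractions below are on nat and are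
   never truncated under the hypotheses n <= a, i <= m-1 <= n. *)

Definition g (n a m : nat) : rat :=
  (((a + m - n + 1)`!)%:R * ((a + 4)`!)%:R * (m + 1)%:R) /
  (2%:R * ((a + m + 3)`!)%:R * ((a - n + 2)`!)%:R).

Definition Cf (n a i : nat) : rat :=
  (n + i + i * n + 1)%:R / ('C(a, n))%:R
  + (2 * i + a - n + 3)%:R / ('C(a, n - i))%:R.

From mathcomp Require Import all_boot all_algebra.
From mathcomp Require Import ring zify.
Import GRing.Theory Num.Theory.
Local Open Scope ring_scope.

(* Write a = n + d and let S(m) be the left-hand side.  The summand
   1/(C(m,k) C(a,n-k)) satisfies a contiguity relation in m and one in k;
   combining them, the sum over k of a suitable multiple of the summand
   telescopes, which yields the first-order recurrence
     (a+m+4)(m+1) S(m+1) = (d+m+2)(m+2) S(m) + C(m).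
   Since g solves the homogeneous recurrence, S/g telescopes as well. *)

Lemma summation_factor {F : fieldType} (u g c alpha beta : nat -> F) (m : nat) :
  u 0%N = 0 ->
  (forall i, (i < m)%N -> alpha i * u i.+1 = beta i * u i + c i) ->
  (forall i, (i < m)%N -> alpha i * g i.+1 = beta i * g i) ->
  (forall i, (i < m)%N -> [&& alpha i != 0, beta i != 0 & g i != 0]) ->
  u m = g m * \sum_(0 <= i < m) c i / (g i * beta i).
Proof.
move=> u0; elim: m => [|m IH] rec grec nz; first by rewrite big_geq // mulr0.
have /and3P[a0 b0 g0] := nz m (ltnSn m).
have -> : u m.+1 = (beta m * u m + c m) / alpha m by rewrite -rec // mulrC mulKf.
have -> : g m.+1 = beta m * g m / alpha m by rewrite -grec // mulrC mulKf.
rewrite big_nat_recr //= IH => [|i /ltnW|i /ltnW|i /ltnW]; [|exact: rec|exact: grec|exact: nz].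
by field; rewrite a0 b0 g0.
Qed.

Section InverseBinomialProducts.
Variables (R : numFieldType) (n d : nat).

Lemma natr_binom_neq0 [x y : nat] : (y <= x)%N -> ('C(x, y))%:R != 0 :> R.
Proof. by move=> le_yx; rewrite pnatr_eq0 -lt0n bin_gt0. Qed.

Lemma natr_binom_top_neq0 k : 'C(n + d, n - k)%:R != 0 :> R.
Proof. by apply: natr_binom_neq0; lia. Qed.

Definition invbin2 m k : R := ('C(m, k)%:R)^-1 * ('C(n + d, n - k)%:R)^-1.

Lemma invbin2_succl m k : (k <= m)%N ->
  invbin2 m.+1 k * m.+1%:R = invbin2 m k * (m.+1 - k)%:R.
Proof.
move=> le_km.
have Cm0 := natr_binom_neq0 le_km.
have CSm0 := natr_binom_neq0 (leqW le_km).
have -> : (m.+1 - k)%:R = m.+1%:R * 'C(m, k)%:R / 'C(m.+1, k)%:R :> R.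
  by rewrite -!natrM mul_bin_down natrM mulfK.
by rewrite /invbin2; field; rewrite Cm0 CSm0 natr_binom_top_neq0.
Qed.

Lemma invbin2_succr m k : (k < m)%N -> (k < n)%N ->
  invbin2 m k.+1 * ((m - k) * (n - k))%:R = invbin2 m k * (k.+1 * (d + k).+1)%:R.
Proof.
move=> lt_km lt_kn.
have Cmk : k.+1%:R * 'C(m, k.+1)%:R = (m - k)%:R * 'C(m, k)%:R :> R.
  by rewrite -!natrM mul_bin_left.
have Cnk : (n - k)%:R * 'C(n + d, n - k)%:R = (d + k).+1%:R * 'C(n + d, n - k.+1)%:R :> R.
  have -> : (n - k = (n - k.+1).+1)%N by lia.
  by rewrite -!natrM mul_bin_left; congr (_ * _)%:R; lia.
have C1 := natr_binom_neq0 (ltnW lt_km); have C2 := natr_binom_neq0 lt_km.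
have C3 := natr_binom_top_neq0 k; have C4 := natr_binom_top_neq0 k.+1.
rewrite !natrM.
have -> : (m - k)%:R = k.+1%:R * 'C(m, k.+1)%:R / 'C(m, k)%:R :> R.
  by rewrite Cmk mulfK.
have -> : (n - k)%:R = (d + k).+1%:R * 'C(n + d, n - k.+1)%:R / 'C(n + d, n - k)%:R :> R.
  by rewrite -Cnk mulfK.
by rewrite /invbin2; field; rewrite C1 C2 C3 C4.
Qed.

Definition invbin2_boundary m j : R := invbin2 m j * ((m.+1 - j) * (n.+1 - j))%:R.

Lemma invbin2_telescope m k : (k < m)%N -> (m <= n)%N ->
  invbin2 m k * ((n + d + m + 4) * (m.+1 - k))%:R
  - invbin2 m k * ((d + m + 2) * (m + 2))%:R
  = invbin2_boundary m k - invbin2_boundary m k.+1.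
Proof.
move=> lt_km le_mn.
rewrite /invbin2_boundary !subSS invbin2_succr //; last exact: leq_trans le_mn.
have coef_eq : ((n + d + m + 4) * (m.+1 - k) + k.+1 * (d + k).+1
            = (m.+1 - k) * (n.+1 - k) + (d + m + 2) * (m + 2))%N by nia.
have -> : ((n + d + m + 4) * (m.+1 - k))%:R
          = ((m.+1 - k) * (n.+1 - k))%:R + ((d + m + 2) * (m + 2))%:R
            - (k.+1 * (d + k).+1)%:R :> R by rewrite -natrD -coef_eq natrD addrK.
ring.
Qed.
End InverseBinomialProducts.

Definition invbin2_sum (n d m : nat) : rat := \sum_(0 <= k < m) invbin2 rat n d m k.

Lemma invbin2_sum_recurrence n d m : (m <= n)%N ->
  ((n + d + m + 4) * m.+1)%:R * invbin2_sum n d m.+1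
  = ((d + m + 2) * (m + 2))%:R * invbin2_sum n d m + Cf n (n + d) m.
Proof.
move=> le_mn; rewrite /invbin2_sum.
set t := invbin2 rat n d; set bd := invbin2_boundary rat n d m.
set A := fun k => ((n + d + m + 4) * (m.+1 - k))%N; set B := ((d + m + 2) * (m + 2))%N.
have shift_m : ((n + d + m + 4) * m.+1)%:R * \sum_(0 <= k < m.+1) t m.+1 k
               = \sum_(0 <= k < m.+1) t m k * (A k)%:R.
  rewrite big_distrr /=; apply: eq_big_nat => k /andP[_ le_km].
  by rewrite !natrM -mulrA [m.+1%:R * _]mulrC invbin2_succl // /t; ring.
have tele : \sum_(0 <= k < m) (t m k * (A k)%:R - t m k * B%:R) = bd 0 - bd m.
  rewrite (telescope_sumr_eq (fun j => - bd j)) ?opprK 1?addrC //.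
  by move=> k /andP[_ lt_km]; rewrite invbin2_telescope // opprK addrC.
rewrite shift_m big_nat_recr //= -[X in X + _](subrK (\sum_(0 <= k < m) t m k * B%:R)).
rewrite -sumrB tele -big_distrl /= mulrC /bd /invbin2_boundary /A /t /invbin2 /Cf.
rewrite bin0 binn !subn0 subSnn.
have -> : (2 * m + (n + d) - n + 3 = 2 * m + d + 3)%N by lia.
rewrite /B !natrM natrB ?leqW // -natr1 !natrD.
by field; rewrite !natr_binom_neq0 //; lia.
Qed.

Lemma g_neq0 n a m : g n a m != 0.
Proof.
by rewrite /g mulf_neq0 ?invr_eq0 ?mulf_neq0 ?pnatr_eq0 -?lt0n ?fact_gt0 ?addn1.
Qed.

Lemma g_succ n d m :
  g n (n + d) m.+1 * ((n + d + m + 4) * m.+1)%:R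
  = g n (n + d) m * ((d + m + 2) * (m + 2))%:R.
Proof.
rewrite /g.
have -> : (n + d + m.+1 - n + 1 = (d + m + 1).+1)%N by lia.
have -> : (n + d + m - n + 1 = d + m + 1)%N by lia.
have -> : (n + d + m.+1 + 3 = (n + d + m + 3).+1)%N by lia.
rewrite !factS !natrM -!natr1 !natrD.
have fact_neq0 k : k`!%:R != 0 :> rat by rewrite pnatr_eq0 -lt0n fact_gt0.
by field; rewrite !fact_neq0 -!natrD natr1 pnatr_eq0.
Qed.

Theorem theorem3 (m n a : nat) (hm1 : (1 <= m)%N) (hm2 : (m <= n + 1)%N)
  (hna : (n <= a)%N) :
  \sum_(0 <= k < m) (('C(m, k))%:R : rat)^-1 * (('C(a, n - k))%:R)^-1
  = g n a m * \sum_(0 <= i < m)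
      Cf n a i / (g n a i * (i + 2)%:R * (a + i - n + 2)%:R).
Proof.
have [d ->] : exists d, a = (n + d)%N by exists (a - n)%N; lia.
have beta_nat i : (i + 2)%:R * (n + d + i - n + 2)%:R = ((d + i + 2) * (i + 2))%:R :> rat.
  by rewrite mulrC -natrM; congr (_ * _)%:R; lia.
under [in RHS]eq_bigr do rewrite -mulrA beta_nat.
apply: (summation_factor (invbin2_sum n d) (g n (n + d)) (Cf n (n + d))
          (fun i => ((n + d + i + 4) * i.+1)%:R) (fun i => ((d + i + 2) * (i + 2))%:R)).
- by rewrite /invbin2_sum big_geq.
- by move=> i lt_im; apply: invbin2_sum_recurrence; lia.
- by move=> i _; rewrite mulrC g_succ mulrC.
- by move=> i _; rewrite !pnatr_eq0 g_neq0 -!lt0n !muln_gt0 !addn_gt0 !orbT.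
Qed.
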